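(* Let $r\ge 1$, $n\ge 1$ and $k\ge 0$ be integers and let $s:[n]\to\{0,1,\dots,r\}$. The simplicial complex $C_s(n,k,\dots,k)$ (with $k$ repeated $r$ times) is non-empty if and only if $\sum_{i=1}^n s(i)\ge rk$.
   Context: For $\mathbf{k}=(k_1,\dots,k_r)$ with $k_i\ge 0$ and $s:[n]\to\{0,\dots,r\}$, the complex $C_s(n,\mathbf{k})$ has as vertices the $r$-tuples $(A_1,\dots,A_r)$ of subsets of $[n]$ such that $|A_j|\ge k_j$ for all $j$ and, for each $x\in[n]$, the number of $1\le j\le r$ with $x\in A_j$ is exactly $s(x)$. A set of vertices $\{(A_1^i,\dots,A_r^i)\}_{i\in I}$ is a face iff $|\bigcap_{i\in I}A_j^i|\ge k_j$ for all $j=1,\dots,r$. Non-empty means it has at least one vertex. *)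

From mathcomp Require Import all_boot.
Set Implicit Arguments. Unset Strict Implicit. Unset Printing Implicit Defensive.

(* [n] is 'I_n, indices 1..r are 'I_r.  A vertex candidate is an r-tuple
   (A_1,...,A_r) of subsets of [n], encoded as a finite function. *)
Definition tuple_sets (n r : nat) := {ffun 'I_r -> {set 'I_n}}.

Definition is_vertex (n r : nat) (k : 'I_r -> nat) (s : 'I_n -> nat)
  (A : tuple_sets n r) : Prop :=
  (forall j : 'I_r, k j <= #|A j|) /\
  (forall x : 'I_n, #|[set j : 'I_r | x \in A j]| = s x).

Definition is_face (n r : nat) (k : 'I_r -> nat) (s : 'I_n -> nat)
  (F : {set tuple_sets n r}) : Prop :=
  (forall A, A \in F -> is_vertex k s A) /\
  (forall j : 'I_r, k j <= #|\bigcap_(A in F) A j|).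

Definition C_nonempty (n r : nat) (k : 'I_r -> nat) (s : 'I_n -> nat) : Prop :=
  exists F : {set tuple_sets n r}, is_face k s F /\ F != set0.

(** Counting the incidences between the elements and the sets of a vertex in
    two ways gives [\sum_j |A_j| = \sum_x s(x)], which is at least [r k].
    Conversely, lay the elements of [[n]] out on a line, [x] occupying a block
    of [s(x)] consecutive positions, and put the element at position [p] into
    [A_(p mod r)].  A block has length at most [r], so its positions have
    distinct residues: [x] lies in exactly [s(x)] sets, and the [k] positions
    [j, j + r, ..., j + (k-1) r] (all below [r k <= \sum s]) belong to [k]
    distinct elements of [A_j].  A single vertex is a face. *)

From mathcomp Require Import all_boot.
From mathcomp Require Import zify.

Lemma eq_mod_window (r a p q : nat) :
  a <= p < a + r -> a <= q < a + r -> p = q %[mod r] -> p = q.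
Proof.
move=> /andP [le_ap lt_pa] /andP [le_aq lt_qa].
rewrite -(subnKC le_ap) -(subnKC le_aq) => /eqP; rewrite eqn_modDl.
by rewrite !modn_small ?ltn_subLR // => /eqP ->.
Qed.

Lemma discrete_ivt (f : nat -> nat) (p m : nat) :
  f 0 <= p < f m -> exists2 i, i < m & f i <= p < f i.+1.
Proof.
elim: m => [|m IHm] /andP [f0p pfm]; first by move: f0p pfm; lia.
case: (ltnP p (f m)) => [pfm' | fmp]; last by exists m; rewrite ?fmp.
by case: IHm => [|i lt_im hi]; [rewrite f0p | exists i => //; apply: ltnW].
Qed.

Lemma sum_card_incidence (I T : finType) (A : I -> {set T}) :
  \sum_(i : I) #|A i| = \sum_(x : T) #|[set i | x \in A i]|.
Proof.
under eq_bigr => i _ do rewrite -sum1_card big_mkcond /=.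
rewrite exchange_big; apply: eq_bigr => x _.
by rewrite -sum1_card [RHS]big_mkcond; apply: eq_bigr => i _; rewrite inE.
Qed.

Lemma vertex_sum_bound (n r k : nat) (s : 'I_n -> nat) (A : tuple_sets n r) :
  is_vertex (fun _ => k) s A -> r * k <= \sum_(x < n) s x.
Proof.
case=> large_A mem_A; rewrite -[r in r * k]card_ord -sum_nat_const.
under [X in _ <= X]eq_bigr => x _ do rewrite -mem_A.
by rewrite -sum_card_incidence; apply: leq_sum.
Qed.

Lemma C_nonemptyP (n r : nat) (k : 'I_r -> nat) (s : 'I_n -> nat) :
  C_nonempty k s <-> exists A, is_vertex k s A.
Proof.
split=> [[F [[vertF _] /set0Pn [A FA]]] | [A vA]]; first by exists A; apply: vertF.
exists [set A]; split; last by apply/set0Pn; exists A; rewrite inE.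
split=> [B /set1P -> // | j]; rewrite big_set1; exact: vA.1.
Qed.

Section CyclicFilling.

Variables (n r : nat) (s : 'I_n -> nat).
Hypothesis r_gt0 : 0 < r.
Hypothesis s_le_r : forall x, s x <= r.

Definition prefix_sum (i : nat) : nat := \sum_(y < n | y < i) s y.

Lemma prefix_sumS (x : 'I_n) : prefix_sum x.+1 = prefix_sum x + s x.
Proof.
rewrite /prefix_sum (bigD1 x) //= addnC; congr (_ + _).
by apply: eq_bigl => y; rewrite ltnS ltn_neqAle andbC.
Qed.

Lemma block_cover (p : nat) : p < \sum_(x < n) s x ->
  exists x : 'I_n, prefix_sum x <= p < prefix_sum x + s x.
Proof.
have ->: \sum_(x < n) s x = prefix_sum n by apply: eq_bigl => y; rewrite ltn_ord.
move=> lt_pn; case: (@discrete_ivt prefix_sum p n) => [|i lt_in].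
  by rewrite lt_pn andbT /prefix_sum big_pred0.
by exists (Ordinal lt_in); rewrite -prefix_sumS.
Qed.

Definition slot (x : 'I_n) (c : 'I_(s x)) : 'I_r :=
  Ordinal (ltn_pmod (prefix_sum x + c) r_gt0).

Definition cyclic_filling : tuple_sets n r :=
  [ffun j => [set x | [exists c, slot x c == j]]].

Lemma cyclic_fillingP (x : 'I_n) (j : 'I_r) :
  reflect (exists c, slot x c = j) (x \in cyclic_filling j).
Proof. by rewrite ffunE inE; apply: (iffP existsP) => -[c /eqP]; exists c. Qed.

Lemma slot_inj (x : 'I_n) : injective (slot x).
Proof.
move=> c1 c2 /(congr1 val) /= e; apply: val_inj => /=; apply/eqP.
rewrite -(eqn_add2l (prefix_sum x)); apply/eqP.
have c_win (c : 'I_(s x)) :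
  prefix_sum x <= prefix_sum x + c < prefix_sum x + r.
  by rewrite leq_addr ltn_add2l (leq_trans _ (s_le_r x)).
exact: eq_mod_window (c_win c1) (c_win c2) e.
Qed.

Lemma card_cyclic_filling_mem (x : 'I_n) :
  #|[set j | x \in cyclic_filling j]| = s x.
Proof.
rewrite -[RHS]card_ord -(card_imset _ (@slot_inj x)).
by apply: eq_card => j; rewrite inE; apply/cyclic_fillingP/imsetP => -[c];
  [exists c | move=> _ ->; exists c].
Qed.

Lemma card_cyclic_filling (k : nat) (j : 'I_r) :
  r * k <= \sum_(x < n) s x -> k <= #|cyclic_filling j|.
Proof.
move=> rk_le.
have pos_covered (i : 'I_k) : i * r + j < \sum_(x < n) s x.
  by apply: leq_trans rk_le; have := ltn_ord i; have := ltn_ord j; nia.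
have /fin_all_exists [owner own_pos] i := @block_cover _ (pos_covered i).
have owner_inj : injective owner.
  move=> i1 i2 eq_own; apply: ord_inj; apply/eqP; rewrite -(eqn_pmul2r r_gt0).
  rewrite -(eqn_add2r j); apply/eqP; apply: (@eq_mod_window r (prefix_sum (owner i1))).
  - by have := own_pos i1; have := s_le_r (owner i1); lia.
  - by rewrite eq_own; have := own_pos i2; have := s_le_r (owner i2); lia.
  - by rewrite !modnMDl.
rewrite -[k in k <= _]card_ord -(card_imset _ owner_inj).
apply/subset_leq_card/subsetP => _ /imsetP [i _ ->]; apply/cyclic_fillingP.
have [lo hi] := andP (own_pos i).
have lt_c : i * r + j - prefix_sum (owner i) < s (owner i) by lia.
exists (Ordinal lt_c); apply: val_inj => /=.
by rewrite subnKC // modnMDl modn_small.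
Qed.

Lemma cyclic_filling_vertex (k : nat) :
  r * k <= \sum_(x < n) s x -> is_vertex (fun _ => k) s cyclic_filling.
Proof.
move=> rk_le; split=> [j | x]; first exact: card_cyclic_filling.
exact: card_cyclic_filling_mem.
Qed.

End CyclicFilling.

Theorem mainTheorem4 (r n k : nat) (s : 'I_n -> nat) :
  1 <= r -> 1 <= n -> (forall x : 'I_n, s x <= r) ->
  (C_nonempty (fun _ : 'I_r => k) s <-> r * k <= \sum_(i < n) s i).
Proof.
move=> r_gt0 _ s_le_r; rewrite C_nonemptyP; split=> [[A] | rk_le].
  exact: vertex_sum_bound.
by exists (cyclic_filling _ _ s r_gt0); apply: cyclic_filling_vertex.
Qed.
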